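(* Let $H$ be a Hilbert space and $U_{ik}\in B(H)$, $i,k=1,\dots,n$, operators satisfying relations (R1)–(R5). Then for all $i,j,k,l$ with $i\neq j$ and $k\neq l$, $$U_{ik}U_{jl}=\omega_{ji}\omega_{kl}U_{jl}U_{ik}.$$
   Context: $n\ge2$, $\theta\in M_n(\mathbb R)$ skew-symmetric, $\omega_{ij}=e^{2\pi i\theta_{ij}}$. Relations, for all $i,j,k,l\in\{1,\dots,n\}$: (R1) $U_{ik}U_{jl}+\omega_{ji}U_{jk}U_{il}=\omega_{kl}U_{il}U_{jk}+\omega_{ji}\omega_{kl}U_{jl}U_{ik}$; (R2) $\sum_iU_{ik}U_{il}^*=\delta_{kl}1$; (R3) $\sum_iU_{il}^*U_{ik}=\delta_{kl}1$; (R4) $U_{jk}U_{ik}^*=0$ for $i\neq j$; (R5) $U_{ik}^*U_{jk}=0$ for $i\neq j$. *)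

From HB Require Import structures.
From mathcomp Require Import all_boot all_order all_algebra.
From mathcomp Require Import complex.
From mathcomp Require Import reals trigo.
Set Implicit Arguments. Unset Strict Implicit. Unset Printing Implicit Defensive.
Import Order.TTheory GRing.Theory Num.Theory.
Local Open Scope ring_scope.
Local Open Scope complex_scope.

Section Hilbert.
Variable R : realType.
Variable H : lmodType R[i].
Variable ip : H -> H -> R[i].   (* inner product, linear in 1st argument *)

Definition ipnorm (x : H) : R := Num.sqrt (complex.Re (ip x x)).

Definition is_hilbert : Prop :=
  [/\ (forall a x y z, ip (a *: x + y) z = a * ip x z + ip y z),
      (forall x y, ip y x = (ip x y)^*),
      (forall x, 0 <= ip x x),
      (forall x, ip x x = 0 -> x = 0) &
      (forall u : nat -> H,
         (forall e : R, 0 < e -> exists N, forall m k, (N <= m)%N -> (N <= k)%N ->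
              ipnorm (u m - u k) < e) ->
         exists x, forall e : R, 0 < e -> exists N, forall m, (N <= m)%N ->
              ipnorm (u m - x) < e)].

Definition is_bounded (T : H -> H) : Prop :=
  (forall a x y, T (a *: x + y) = a *: T x + T y) /\
  exists M : R, forall x, ipnorm (T x) <= M * ipnorm x.

Definition is_adjoint (T Ts : H -> H) : Prop :=
  forall x y, ip (T x) y = ip x (Ts y).

Definition opmul (S T : H -> H) : H -> H := fun x => S (T x).
Definition opadd (S T : H -> H) : H -> H := fun x => S x + T x.
Definition opscale (a : R[i]) (T : H -> H) : H -> H := fun x => a *: T x.
Definition opid : H -> H := fun x => x.
Definition opzero : H -> H := fun _ => 0.
Definition opsum n (F : 'I_n -> H -> H) : H -> H := fun x => \sum_(i < n) F i x.
End Hilbert.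

(* omega = exp(2 pi i theta) *)
Definition omega (R : realType) (t : R) : R[i] :=
  (cos (2 * pi * t)) +i* (sin (2 * pi * t)).

(* Put X := U_ik U_jl - c U_jl U_ik with c = w_ji w_kl.  Inserting the
   resolutions of the identity sum_b Us_bl U_bl = 1 (R3) on the right and
   sum_a U_al Us_al = 1 (R2) on the left writes X as the double sum of the
   U_al Us_al X Us_bl U_bl, and every term vanishes.  When a, b <> j this is
   (R4)/(R5) applied to the two products in X; when a, b <> i it is the same
   after (R1) rewrites X as w_kl U_il U_jk - w_ji U_jk U_il.  The terms
   (a, b) = (i, j) and (j, i) die because, for k <> l, (R2) and (R3) give
   U_il Us_il U_ik = 0 and U_ik Us_il U_il = 0, and the latter yields
   U_ik Us_il = 0 since Us_il = Us_il U_il Us_il. *)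

From HB Require Import structures.
From mathcomp Require Import all_boot all_order all_algebra.
From mathcomp Require Import complex.
From mathcomp Require Import reals trigo.
From Stdlib Require Import FunctionalExtensionality.
Set Implicit Arguments. Unset Strict Implicit. Unset Printing Implicit Defensive.

Import Order.TTheory GRing.Theory Num.Theory.
Local Open Scope ring_scope.
Local Open Scope complex_scope.

Section InnerProduct.
Variables (R : realType) (H : lmodType R[i]) (ip : H -> H -> R[i]).
Hypothesis ipDl : forall a x y z, ip (a *: x + y) z = a * ip x z + ip y z.
Hypothesis ipC : forall x y, ip y x = (ip x y)^*.
Hypothesis ip_eq0 : forall x, ip x x = 0 -> x = 0.

Lemma ipDr z a x y : ip z (a *: x + y) = a^* * ip z x + ip z y.
Proof. by rewrite ipC ipDl rmorphD rmorphM (ipC x z) (ipC y z). Qed.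

Lemma ip_injr u v : (forall z, ip z u = ip z v) -> u = v.
Proof.
move=> euv; apply/eqP; rewrite -subr_eq0; apply/eqP/ip_eq0.
have euv_l z : ip u z = ip v z by rewrite ipC euv -ipC.
by rewrite -scaleN1r addrC ipDl euv_l mulN1r addNr.
Qed.

Lemma adjoint_linear T Ts : is_adjoint ip T Ts -> linear Ts.
Proof.
move=> adjT a x y; apply: ip_injr => z.
by rewrite -adjT !ipDr !adjT.
Qed.

End InnerProduct.

Section UnitaryRelations.
Variables (F : pzRingType) (V : lmodType F) (n : nat).
Variables U Us : 'I_n -> 'I_n -> {linear V -> V}.
Hypothesis sum_U_Us : forall k l v,
  \sum_(a < n) U a k (Us a l v) = if k == l then v else 0.
Hypothesis sum_Us_U : forall k l v,
  \sum_(a < n) Us a l (U a k v) = if k == l then v else 0.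
Hypothesis U_Us_row_eq0 : forall i j, i != j -> forall k v, U j k (Us i k v) = 0.
Hypothesis Us_U_row_eq0 : forall i j, i != j -> forall k v, Us i k (U j k v) = 0.

Lemma Us_U_Us i l v : Us i l (U i l (Us i l v)) = Us i l v.
Proof.
have := sum_U_Us l l v; rewrite eqxx => sumv; rewrite -{2}sumv.
rewrite linear_sum (bigD1 i) //= big1 ?addr0 // => a nai.
by rewrite Us_U_row_eq0 // eq_sym.
Qed.

Lemma U_Us_U_col_eq0 i k l z : k != l -> U i l (Us i l (U i k z)) = 0.
Proof.
move=> /negbTE nkl; have := sum_Us_U k l z; rewrite nkl => /(congr1 (U i l)).
rewrite linear0 linear_sum (bigD1 i) //= big1 ?addr0 // => a nai.
exact: U_Us_row_eq0.
Qed.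

Lemma U_Us_col_eq0 i k l v : k != l -> U i k (Us i l v) = 0.
Proof.
move=> /negbTE nkl; rewrite -[Us i l v]Us_U_Us.
have := sum_U_Us k l (U i l (Us i l v)); rewrite nkl (bigD1 i) //= big1 ?addr0 //.
by move=> a nai; rewrite Us_U_row_eq0 ?linear0.
Qed.

Lemma sandwich (X : {additive V -> V}) l x :
  X x = \sum_(a < n) \sum_(b < n) U a l (Us a l (X (Us b l (U b l x)))).
Proof.
have := sum_Us_U l l x; rewrite eqxx => sumx.
rewrite exchange_big /= -{1}sumx raddf_sum; apply: eq_bigr => b _.
by have := sum_U_Us l l (X (Us b l (U b l x))); rewrite eqxx.
Qed.

Lemma U_commute i j k l (a b c : F) : i != j -> k != l ->
  (forall v, U i k (U j l v) + b *: U j k (U i l v)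
             = a *: U i l (U j k v) + c *: U j l (U i k v)) ->
  forall v, U i k (U j l v) = c *: U j l (U i k v).
Proof.
move=> nij nkl exchange v; apply/eqP; rewrite -subr_eq0; apply/eqP.
pose X : {additive V -> V} := (U i k \o U j l) \- c \*: (U j l \o U i k).
have XE y : X y = U i k (U j l y) - c *: U j l (U i k y) by [].
have XE' y : X y = a *: U i l (U j k y) - b *: U j k (U i l y).
  by rewrite XE -[U i k _](addrK (b *: U j k (U i l y))) exchange addrAC addrK.
have UsX p y :
    Us p l (X y) = Us p l (U i k (U j l y)) - c *: Us p l (U j l (U i k y)).
  by rewrite XE linearB linearZ.
have UsX' p y :
    Us p l (X y) = a *: Us p l (U i l (U j k y)) - b *: Us p l (U j k (U i l y)).
  by rewrite XE' linearB !linearZ.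
have off_j p q y : p != j -> q != j -> U p l (Us p l (X (Us q l y))) = 0.
  move=> npj nqj.
  by rewrite UsX (U_Us_row_eq0 nqj) (Us_U_row_eq0 npj) !linear0 scaler0 subr0 linear0.
have off_i p q y : p != i -> q != i -> U p l (Us p l (X (Us q l y))) = 0.
  move=> npi nqi.
  by rewrite UsX' (U_Us_row_eq0 nqi) (Us_U_row_eq0 npi) !linear0 !scaler0 subr0 linear0.
have nji : j != i by rewrite eq_sym.
rewrite -XE (@sandwich X l) big1 // => p _; apply: big1 => q _.
have [->|npj] := eqVneq p j; have [->|nqj] := eqVneq q j.
- exact: off_i.
- have [->|nqi] := eqVneq q i; last exact: off_i.
  by rewrite XE (U_Us_col_eq0 _ _ nkl) (U_Us_row_eq0 nij) !linear0 scaler0 subr0 !linear0.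
- have [->|npi] := eqVneq p i; last exact: off_i.
  by rewrite UsX (Us_U_row_eq0 nij) scaler0 subr0 U_Us_U_col_eq0.
- exact: off_j.
Qed.

End UnitaryRelations.

Theorem proposition3p16 (R : realType) (H : lmodType R[i]) (ip : H -> H -> R[i])
  (n : nat) (theta : 'M[R]_n) (U Us : 'I_n -> 'I_n -> H -> H) :
  is_hilbert ip ->
  (2 <= n)%N ->
  theta^T = - theta ->
  (forall i k, is_bounded ip (U i k)) ->
  (forall i k, is_adjoint ip (U i k) (Us i k)) ->
  (* (R1) *)
  (forall i j k l,
     opadd (opmul (U i k) (U j l)) (opscale (omega (theta j i)) (opmul (U j k) (U i l)))
     = opadd (opscale (omega (theta k l)) (opmul (U i l) (U j k)))
             (opscale (omega (theta j i) * omega (theta k l)) (opmul (U j l) (U i k)))) ->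
  (* (R2) *)
  (forall k l, opsum (fun i => opmul (U i k) (Us i l)) = if k == l then @opid _ H else @opzero _ H) ->
  (* (R3) *)
  (forall k l, opsum (fun i => opmul (Us i l) (U i k)) = if k == l then @opid _ H else @opzero _ H) ->
  (* (R4) *)
  (forall i j k, i != j -> opmul (U j k) (Us i k) = @opzero _ H) ->
  (* (R5) *)
  (forall i j k, i != j -> opmul (Us i k) (U j k) = @opzero _ H) ->
  forall i j k l, i != j -> k != l ->
    opmul (U i k) (U j l)
    = opscale (omega (theta j i) * omega (theta k l)) (opmul (U j l) (U i k)).
Proof.
(* Boundedness is used only through linearity. *)
case=> ipDl ipC _ ip_eq0 _ _ _ boundedU adjU R1 R2 R3 R4 R5 i j k l nij nkl.
pose UL a b : {linear H -> H} :=
  HB.pack (U a b) (GRing.isLinear.Build _ _ _ _ (U a b) (proj1 (boundedU a b))).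
pose UsL a b : {linear H -> H} := HB.pack (Us a b)
  (GRing.isLinear.Build _ _ _ _ (Us a b) (adjoint_linear ipDl ipC ip_eq0 (adjU a b))).
have sum_U_Us k' l' w :
    \sum_(a < n) U a k' (Us a l' w) = if k' == l' then w else 0.
  by have := congr1 (@^~ w) (R2 k' l'); case: eqP.
have sum_Us_U k' l' w :
    \sum_(a < n) Us a l' (U a k' w) = if k' == l' then w else 0.
  by have := congr1 (@^~ w) (R3 k' l'); case: eqP.
have U_Us_row_eq0 p q : p != q -> forall k' w, U q k' (Us p k' w) = 0.
  by move=> npq k' w; have := congr1 (@^~ w) (R4 p q k' npq).
have Us_U_row_eq0 p q : p != q -> forall k' w, Us p k' (U q k' w) = 0.
  by move=> npq k' w; have := congr1 (@^~ w) (R5 p q k' npq).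
have exchange w : U i k (U j l w) + omega (theta j i) *: U j k (U i l w)
    = omega (theta k l) *: U i l (U j k w)
      + (omega (theta j i) * omega (theta k l)) *: U j l (U i k w).
  exact: (congr1 (@^~ w) (R1 i j k l)).
apply: functional_extensionality => v.
exact (U_commute (U := UL) (Us := UsL)
  sum_U_Us sum_Us_U U_Us_row_eq0 Us_U_row_eq0 nij nkl exchange v).
Qed.
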